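(* Let $f_0(1)=0$ and $f_0(n)=1$ for $n\ge2$, and let $m\ge1$. For $n>3$ and $1\le k\le\lfloor n/2\rfloor$, $c_m(n,k)$ equals the number of words of length $n-3$ over the alphabet $\{0,1,\ldots,m\}$ with exactly $k-1$ letters equal to $1$ and in which all nonzero letters are isolated (no two nonzero letters are adjacent). Moreover, for $1\le k\le\lfloor n/2\rfloor$, \[c_m(n,k)=\sum_{j=0}^{\lfloor\frac{n}{2}\rfloor-k}(m-1)^{j}\binom{j+k-1}{k-1}\binom{n-k-j-1}{k+j-1},\] and $c_m(n,k)=0$ when $\lfloor n/2\rfloor<k\le n$.
   Context: For $m\ge 1$, $f_m$ is the invert transform of $f_{m-1}$, i.e. $f_m(n)=f_{m-1}(n)+\sum_{i=1}^{n-1}f_{m-1}(i)f_m(n-i)$ for $n\ge1$. For $m\ge1$ the numbers $c_m(n,k)$, $0\le k\le n$, are defined by $c_m(0,0)=1$, $c_m(n,0)=0$ for $n\ge1$, and $c_m(n,k)=\sum_{i=1}^{n-k+1}f_{m-1}(i)\,c_m(n-i,k-1)$ for $1\le k\le n$. The convention $0^0=1$ is used. *)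

From mathcomp Require Import all_boot.
Set Implicit Arguments. Unset Strict Implicit. Unset Printing Implicit Defensive.

(* f_0(1) = 0, f_0(n) = 1 for n >= 2 (value at 0 is irrelevant; set to 0). *)
Definition f0 (n : nat) : nat := if 1 < n then 1 else 0.

(* The list [h 0; h 1; ...; h n] of the invert transform h of g, where
   h n = g n + \sum_{i=1}^{n-1} g i * h (n - i) for n >= 1 (h 0 := 0). *)
Fixpoint invert_seq (g : nat -> nat) (n : nat) : seq nat :=
  match n with
  | 0 => [:: 0]
  | n'.+1 =>
      let s := invert_seq g n' in
      rcons s (g n + \sum_(1 <= i < n) g i * nth 0 s (n - i))
  end.

Definition invert (g : nat -> nat) (n : nat) : nat := nth 0 (invert_seq g n) n.

Fixpoint f (m : nat) : nat -> nat :=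
  match m with
  | 0 => f0
  | m'.+1 => invert (f m')
  end.

Fixpoint c (m n k : nat) {struct k} : nat :=
  match k with
  | 0 => (n == 0)
  | k'.+1 => \sum_(1 <= i < n - k + 2) f m.-1 i * c m (n - i) k'
  end.

Definition isolated_nonzero (m : nat) (w : seq 'I_m.+1) : bool :=
  all (fun p : 'I_m.+1 * 'I_m.+1 => (val p.1 == 0) || (val p.2 == 0))
      (zip w (behead w)).

Definition nwords (m L j : nat) : nat :=
  #|[set w : L.-tuple 'I_m.+1 |
      (count (fun x : 'I_m.+1 => val x == 1) w == j) && isolated_nonzero w]|.

From mathcomp Require Import all_boot zify.

Set Implicit Arguments.
Unset Strict Implicit.
Unset Printing Implicit Defensive.

(* The invert transform of a sequence with generating function
   x^2 / (1 - x - a x^2) has generating function x^2 / (1 - x - (a+1) x^2),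
   so f_{m-1} has parameter m - 1 and c_m(n, k), the coefficient of x^n in its
   k-th power, satisfies
     c(n+2, k+1) = c(n+1, k+1) + (m-1) c(n, k+1) + c(n, k).
   Splitting a word by its first letters, and Pascal's rule for the binomial
   sum, give the same recurrence with the same initial values, and such a
   recurrence is determined by its values at k = 0 and at two consecutive n. *)

Section InvertTransform.

Variable g : nat -> nat.

Lemma size_invert_seq n : size (invert_seq g n) = n.+1.
Proof. by elim: n => //= n IH; rewrite size_rcons IH. Qed.

Lemma nth_invert_seq n k : k <= n -> nth 0 (invert_seq g n) k = invert g k.
Proof.
elim: n => [|n IH]; first by rewrite leqn0 => /eqP ->.
rewrite leq_eqVlt => /predU1P[-> //|lt_kn].
by rewrite /= nth_rcons size_invert_seq lt_kn IH.
Qed.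

Lemma invertS n :
  invert g n.+1 = g n.+1 + \sum_(1 <= i < n.+1) g i * invert g (n.+1 - i).
Proof.
rewrite /invert /= nth_rcons size_invert_seq ltnn eqxx; congr (_ + _).
by apply: eq_big_nat => i /andP[i_gt0 _]; rewrite nth_invert_seq //; lia.
Qed.

Lemma invertS_conv n : g 0 = 0 ->
  invert g n.+1 = g n.+1 + \sum_(i < n.+2) g i * invert g (n.+1 - i).
Proof.
move=> g0; rewrite invertS big_ord_recl g0 add0n big_ord_recr /= subnn muln0 addn0.
by rewrite big_add1 big_mkord.
Qed.

End InvertTransform.

(* [g] has generating function x^2 / (1 - x - a x^2). *)
Definition horadam (a : nat) (g : nat -> nat) : Prop :=
  [/\ g 0 = 0, g 1 = 0, g 2 = 1 & forall n, g n.+3 = g n.+2 + a * g n.+1].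

Lemma horadam_conv a g (v : nat -> nat) n : horadam a g ->
  \sum_(i < n.+3) g i * v (n.+2 - i) =
  \sum_(i < n.+2) g i * v (n.+1 - i) + a * \sum_(i < n.+1) g i * v (n - i) + v n.
Proof.
case=> g0 g1 g2 gS.
rewrite !big_ord_recl g0 g1 g2 !mul0n !add0n mul1n /bump /= !subSS subn0.
under eq_bigr do rewrite gS mulnDl -mulnA !subSS.
by rewrite big_split -big_distrr addnC.
Qed.

Lemma horadam_invert a g : horadam a g -> horadam a.+1 (invert g).
Proof.
move=> hg; have [g0 g1 g2 gS] := hg; split=> //.
- by rewrite invertS big_geq // g1.
- by rewrite invertS big_nat1 g1 g2.
move=> n; rewrite !invertS_conv // (horadam_conv _ _ hg) gS.
rewrite [invert g n.+1]invertS_conv //; lia.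
Qed.

Lemma horadam_f m : horadam m (f m).
Proof.
elim: m => [|m IH]; last exact: horadam_invert.
by split=> // n; rewrite mul0n addn0.
Qed.

Section ConvolutionPowers.

Variable m : nat.

Let f_0 : f m.-1 0 = 0. Proof. by case: (horadam_f m.-1). Qed.
Let f_1 : f m.-1 1 = 0. Proof. by case: (horadam_f m.-1). Qed.

Lemma c_eq0 n k : n < k.*2 -> c m n k = 0.
Proof.
elim: k n => [//|k IH] n lt_n_2k /=.
rewrite big_nat_cond big1 // => i /andP[/andP[i_gt0 lt_i] _].
have [le_i1|lt_1i] := leqP i 1; last by rewrite IH ?muln0 //; lia.
by rewrite (_ : i = 1) ?f_1 //; lia.
Qed.

Lemma c_conv n k : c m n k.+1 = \sum_(i < n.+1) f m.-1 i * c m (n - i) k.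
Proof.
have [le_nk|lt_kn] := leqP n k.
  rewrite c_eq0; last by lia.
  rewrite big1 // => -[[|i] lt_in _] /=; first by rewrite f_0.
  by rewrite c_eq0 ?muln0 //; lia.
rewrite -(big_mkord xpredT (fun i => f m.-1 i * c m (n - i) k)) big_ltn // f_0 mul0n add0n.
rewrite (big_cat_nat _ _ (n := n - k.+1 + 2)) //=; try lia.
rewrite [X in _ = _ + X]big_nat_cond [X in _ = _ + X]big1 ?addn0 // => i.
by case/andP=> /andP[le_i lt_i] _; rewrite c_eq0 ?muln0 //; lia.
Qed.

Lemma c_rec n k : c m n.+2 k.+1 = c m n.+1 k.+1 + m.-1 * c m n k.+1 + c m n k.
Proof. by rewrite !c_conv (horadam_conv (c m^~ k) _ (horadam_f m.-1)). Qed.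

Lemma c_double k : c m k.*2 k = 1.
Proof.
by elim: k => [//|k IH]; rewrite doubleS c_rec IH !c_eq0 ?muln0 ?doubleS.
Qed.

Lemma c_doubleS k : c m k.*2.+1 k = k.
Proof.
elim: k => [//|k IH].
by rewrite doubleS c_rec -doubleS c_double IH c_eq0 ?doubleS // muln0 addn0 add1n.
Qed.

End ConvolutionPowers.

(* [s] moves the row index of the last term: [id] in the coordinates (n, k)
   of c_m, [n.+2] in the coordinates (n - 2k, k) used for the binomial sum. *)
Definition grid_rec (a : nat) (s : nat -> nat) (u : nat -> nat -> nat) : Prop :=
  forall n k, u n.+2 k.+1 = u n.+1 k.+1 + a * u n k.+1 + u (s n) k.

Lemma grid_rec_unique a s u v : grid_rec a s u -> grid_rec a s v ->
  (forall n, u n 0 = v n 0) -> (forall k, u 0 k = v 0 k) -> (forall k, u 1 k = v 1 k) ->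
  u =2 v.
Proof.
move=> rec_u rec_v eq_k0 eq_n0 eq_n1 n k; elim: k n => [|k IHk] n; first exact: eq_k0.
suff [] : u n k.+1 = v n k.+1 /\ u n.+1 k.+1 = v n.+1 k.+1 by [].
elim: n => [|n [IH0 IH1]]; first by rewrite eq_n0 eq_n1.
by split=> //; rewrite rec_u rec_v IH0 IH1 IHk.
Qed.

Lemma grid_rec_c m : grid_rec m.-1 (fun n => n.+2) (fun n k => c m (n + k.*2) k).
Proof. by move=> n k; rewrite doubleS !addnS c_rec !addSn. Qed.

Lemma grid_rec_c_shift m : grid_rec m.-1 id (fun n k => c m n.+3 k).
Proof. by move=> n k; rewrite c_rec. Qed.

Definition cterm (a K N j : nat) : nat := a ^ j * 'C(j + K, K) * 'C(N + K - j, K + j).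

(* [c_closed a N k] is the binomial sum claimed for c_m(N + 2k, k) with
   a = m - 1; its summation is written with K = k - 1. *)
Definition c_closed (a N k : nat) : nat :=
  if k is K.+1 then \sum_(j < N.+1) cterm a K N j else N == 0.

Lemma binS_subn n j p : (p = 0 -> j <= n) ->
  'C(n.+1 - j, p.+1) = 'C(n - j, p.+1) + 'C(n - j, p).
Proof.
have [le_jn _|lt_nj] := leqP j n; first by rewrite subSn // binS.
case: p => [/(_ erefl) //|p _].
by rewrite !(eqnP lt_nj) (eqnP (ltnW lt_nj)).
Qed.

Lemma cterm_rec a K N j : cterm a K N.+2 j = cterm a K N.+1 j +
  (if j is j'.+1 then a * cterm a K N j' else 0) +
  (if K is K'.+1 then cterm a K' N.+2 j else 0).
Proof.
rewrite /cterm; case: j => [|j]; case: K => [|K];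
  rewrite ?addn0 ?add0n ?subn0 ?bin0 ?binn ?expn0 ?mul1n ?muln1 ?addSn ?addnS ?subSS ?subn0.
- by [].
- by rewrite binS.
- by rewrite binS_subn ?expnS; lia.
- by rewrite binS binS_subn ?expnS; lia.
Qed.

Lemma sum_cterm_widen a K N :
  \sum_(j < N.+2) cterm a K N j = \sum_(j < N.+1) cterm a K N j.
Proof. by rewrite big_ord_recr /= /cterm (@bin_small (_ - _)) ?muln0 ?addn0 //; lia. Qed.

Lemma grid_rec_c_closed a : grid_rec a (fun n => n.+2) (c_closed a).
Proof.
move=> N K; rewrite /c_closed; under eq_bigr do rewrite cterm_rec.
rewrite !big_split /= sum_cterm_widen; congr (_ + _ + _).
  by rewrite big_ord_recl add0n -big_distrr sum_cterm_widen.
by case: K => [|K] //; rewrite big1.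
Qed.

Lemma c_closed0 a k : c_closed a 0 k = 1.
Proof. by case: k => // K; rewrite /c_closed big_ord1 /cterm subn0 addn0 binn. Qed.

Lemma c_closed1 a k : c_closed a 1 k = k.
Proof.
case: k => // K; rewrite /c_closed big_ord_recr big_ord1 /= /cterm.
by rewrite subn0 add0n addn0 binn (@bin_small (_ - 1)) ?muln0 ?addn0 ?binSn; lia.
Qed.

Lemma c_closedE m N k : c m (N + k.*2) k = c_closed m.-1 N k.
Proof.
apply: (grid_rec_unique (grid_rec_c m) (grid_rec_c_closed m.-1)) => [n|K|K].
- by rewrite addn0.
- by rewrite c_double c_closed0.
- by rewrite add1n c_doubleS c_closed1.
Qed.

Lemma sum_cterm_half a K N :
  \sum_(j < N.+1) cterm a K N j = \sum_(0 <= j < N %/ 2 + 1) cterm a K N j.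
Proof.
rewrite -(big_mkord xpredT) (big_cat_nat _ _ (n := N %/ 2 + 1)) //=; try lia.
rewrite [X in _ + X]big_nat_cond [X in _ + X]big1 ?addn0 // => j.
by case/andP=> /andP[lt_j _] _; rewrite /cterm (@bin_small (_ - _)) ?muln0 //; lia.
Qed.

Lemma big_tuple0 R (idx : R) (op : Monoid.law idx) (T : finType) (F : 0.-tuple T -> R) :
  \big[op/idx]_(t : 0.-tuple T) F t = F [tuple].
Proof. by rewrite -(big_pred1_eq op [tuple]); apply: eq_bigl => t; rewrite tuple0 eqxx. Qed.

Lemma big_tuple_cons R (idx : R) (op : Monoid.com_law idx) (T : finType) n
    (F : n.+1.-tuple T -> R) :
  \big[op/idx]_(t : n.+1.-tuple T) F t =
  \big[op/idx]_(x : T) \big[op/idx]_(t : n.-tuple T) F [tuple of x :: t].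
Proof.
rewrite pair_big (reindex (fun p : T * n.-tuple T => [tuple of p.1 :: p.2])) //=.
exists (fun t => (thead t, [tuple of behead t])) => [[x t] _ | t _] /=.
  by congr (_, _); apply: val_inj.
by rewrite -tuple_eta.
Qed.

Definition isolated_word m j (w : seq 'I_m.+1) : bool :=
  (count (fun x : 'I_m.+1 => val x == 1) w == j) && isolated_nonzero w.

Lemma nwordsE m L j : nwords m L j = \sum_(w : L.-tuple 'I_m.+1) isolated_word j w.
Proof.
rewrite /nwords -sum1_card big_mkcond; apply: eq_bigr => w _.
by rewrite inE /isolated_word; case: (_ && _).
Qed.

Lemma isolated_nonzero_cons m (x : 'I_m.+1) t : isolated_nonzero (x :: t) =
  ((val x == 0) || (if t is y :: _ then val y == 0 else true)) && isolated_nonzero t.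
Proof. by case: t => [|y t] /=; rewrite ?orbT. Qed.

Lemma sum_isolated_word_cons0 m L j (x : 'I_m.+1) : val x = 0 ->
  \sum_(t : L.-tuple 'I_m.+1) isolated_word j (x :: t) = nwords m L j.
Proof.
move=> x0; rewrite nwordsE; apply: eq_bigr => t _.
by rewrite /isolated_word isolated_nonzero_cons /= x0.
Qed.

Lemma sum_isolated_word_cons m L j (x : 'I_m.+1) : val x != 0 ->
  \sum_(t : L.+1.-tuple 'I_m.+1) isolated_word j (x :: t) =
  if val x == 1 then (if j is j'.+1 then nwords m L j' else 0) else nwords m L j.
Proof.
move=> x_neq0; rewrite big_tuple_cons (bigD1 ord0) //= [X in _ + X]big1 => [|y y_neq0].
  rewrite addn0; case: eqP => [x1|x_neq1]; [case: j => [|j] |]; rewrite ?nwordsE.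
  - by apply: big1 => t _; rewrite /isolated_word /= x1.
  - apply: eq_bigr => t _.
    by rewrite /isolated_word /= x1 !isolated_nonzero_cons (eqxx 0) !orbT.
  - apply: eq_bigr => t _; rewrite /isolated_word /= !isolated_nonzero_cons (eqxx 0) !orbT.
    by have /negPf -> : val x != 1 by apply/eqP.
have /negPf y_neq0' : val y != 0 by apply: contra y_neq0 => /eqP y0; apply/eqP/val_inj.
apply: big1 => t _.
by rewrite /isolated_word isolated_nonzero_cons /= (negPf x_neq0) y_neq0' andbF.
Qed.

Lemma nwords_rec a L j : nwords a.+1 L.+2 j =
  nwords a.+1 L.+1 j + a * nwords a.+1 L j + (if j is j'.+1 then nwords a.+1 L j' else 0).
Proof.
rewrite nwordsE big_tuple_cons big_ord_recl sum_isolated_word_cons0 //.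
rewrite big_ord_recl sum_isolated_word_cons //=.
under eq_bigr do rewrite sum_isolated_word_cons //=.
by rewrite sum_nat_const card_ord; lia.
Qed.

Lemma nwords0 m j : nwords m 0 j = (j == 0).
Proof. by rewrite nwordsE big_tuple0 /isolated_word /= eq_sym; case: eqP. Qed.

Lemma nwords1 a j : nwords a.+1 1 j = (j == 0) * a.+1 + (j == 1).
Proof.
rewrite nwordsE big_tuple_cons.
under eq_bigr do rewrite big_tuple0 /isolated_word /= addn0 andbT.
rewrite !big_ord_recl sum_nat_const card_ord /=.
by case: j => [|[|j]] /=; lia.
Qed.

Lemma grid_rec_nwords a :
  grid_rec a id (fun L k => if k is j.+1 then nwords a.+1 L j else 0).
Proof. by move=> L [|j]; rewrite nwords_rec. Qed.

Lemma c_nwords a L k : c a.+1 L.+3 k = if k is j.+1 then nwords a.+1 L j else 0.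
Proof.
apply: (grid_rec_unique (grid_rec_c_shift a.+1) (grid_rec_nwords a)) => {L k} // k.
- case: k => [|j] //; rewrite nwords0; case: j => [|j]; first exact: (c_doubleS _ 1).
  by rewrite c_eq0 //; lia.
- case: k => [|j] //; rewrite nwords1; case: j => [|[|j]].
  + by rewrite c_rec (c_doubleS _ 1) (c_double _ 1) /=; lia.
  + exact: (c_double _ 2).
  + by rewrite c_eq0 //; lia.
Qed.

Theorem corollary29 (m : nat) (hm : 1 <= m) :
  (forall n k, 3 < n -> 1 <= k -> k <= n %/ 2 ->
     c m n k = nwords m (n - 3) (k - 1)) /\
  (forall n k, 1 <= k -> k <= n %/ 2 ->
     c m n k = \sum_(0 <= j < n %/ 2 - k + 1)
                 (m - 1) ^ j * 'C(j + k - 1, k - 1) * 'C(n - k - j - 1, k + j - 1)) /\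
  (forall n k, n %/ 2 < k -> k <= n -> c m n k = 0).
Proof.
case: m hm => [//|a] _; split; [|split] => n k.
- move=> lt3n k_gt0 _; have [L ->] : exists L, n = L.+3 by exists (n - 3); lia.
  by case: k k_gt0 => [|j] // _; rewrite c_nwords !subSS !subn0.
- case: k => [//|K] _ le_k_n2.
  have [N ->] : exists N, n = N + K.+1.*2 by exists (n - K.+1.*2); lia.
  rewrite c_closedE /c_closed sum_cterm_half.
  have -> : (N + K.+1.*2) %/ 2 - K.+1 + 1 = N %/ 2 + 1 by lia.
  apply: eq_big_nat => j _.
  rewrite /cterm subn1 /=; congr (_ * 'C(_, _) * 'C(_, _)); lia.
- by move=> lt_n2_k _; rewrite c_eq0 //; lia.
Qed.
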